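(* Let $\lambda>0$ and let $f$ be a bounded, non-constant function belonging to $\mathcal B_{\lambda}$. For $x,y>0$ let $dP_{y,x}$ be the gamma distribution on $(0,\infty)$ with density $\frac{1}{\Gamma(y)}(y/x)^y t^{y-1}e^{-ty/x}$ with respect to Lebesgue measure, and let $g_\lambda(y)=\frac{y^{\lambda}\Gamma(y)}{\Gamma(\lambda+y)}$. (i) If $\lambda\le 1$, then for all $x,y>0$, $$\int_0^\infty f(t)\,dP_{y,x}(t)<f(x).$$ (ii) If $\lambda>1$, then for all $x,y>0$, $$g_\lambda(y)\int_0^\infty f(t)\,dP_{y,x}(t)<f(x).$$
   Context: For $\lambda>0$, $\mathcal B_\lambda$ (generalized Bernstein functions of order $\lambda$) is the class of non-negative functions $f$ on $(0,\infty)$ having derivatives of all orders such that $x\mapsto f'(x)x^{1-\lambda}$ is completely monotonic on $(0,\infty)$. *)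

From Stdlib Require Import Reals.
From Coquelicot Require Import Coquelicot.
Open Scope R_scope.

Definition completely_monotonic (h : R -> R) : Prop :=
  forall (n : nat) (x : R), 0 < x ->
    ex_derive_n h n x /\ 0 <= (-1) ^ n * Derive_n h n x.

Definition gen_Bernstein (lambda : R) (f : R -> R) : Prop :=
  (forall x, 0 < x -> 0 <= f x) /\
  (forall (n : nat) (x : R), 0 < x -> ex_derive_n f n x) /\
  completely_monotonic (fun x => Derive f x * Rpower x (1 - lambda)).

Definition Gamma (y : R) : R :=
  RInt_gen (fun t => Rpower t (y - 1) * exp (- t))
           (at_right 0) (Rbar_locally p_infty).

Definition gamma_density (y x t : R) : R :=
  / Gamma y * Rpower (y / x) y * Rpower t (y - 1) * exp (- (t * y / x)).

Definition gamma_expect (f : R -> R) (y x : R) : R :=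
  RInt_gen (fun t => f t * gamma_density y x t)
           (at_right 0) (Rbar_locally p_infty).

Definition g_lambda (lambda y : R) : R :=
  Rpower y lambda * Gamma y / Gamma (lambda + y).

From Stdlib Require Import Reals Lra Classical.
From Coquelicot Require Import Coquelicot.
Open Scope R_scope.

(* Let beta = x^(1-l) f'(x) / l be the derivative of f with respect to t^l at x.
   Since t^(1-l) f'(t) is nonincreasing, f(t) - beta t^l increases up to x and decreases
   afterwards, so f(t) <= f(x) + beta (t^l - x^l), strictly somewhere since a bounded f with
   equality everywhere would be constant.  Integrating against P_{y,x}, whose mean is x and
   whose l-th moment is m = (x/y)^l Gamma(y+l) / Gamma(y), gives
   int f dP < f(x) + beta (m - x^l).  By Jensen, m <= x^l when l <= 1, which is (i).  When
   l > 1, m >= x^l and g_l(y) m = x^l, while beta x^l <= f(x) because f >= 0 near 0; hence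
   g_l(y) int f dP < g_l(y) f(x) + (1 - g_l(y)) beta x^l <= f(x), which is (ii). *)

Lemma Rpower_pos x e : 0 < Rpower x e.
Proof. apply exp_pos. Qed.

Lemma is_derive_Rpower x e :
  0 < x -> is_derive (fun t => Rpower t e) x (e * Rpower x (e - 1)).
Proof. intros Hx; apply is_derive_Reals, derivable_pt_lim_power, Hx. Qed.

Lemma ex_derive_Rpower x e : 0 < x -> ex_derive (fun t => Rpower t e) x.
Proof. intros Hx; eexists; apply is_derive_Rpower, Hx. Qed.

Lemma Rpower_inv_Rpower a e : 0 < a -> 0 < e -> Rpower (Rpower a (/ e)) e = a.
Proof. intros Ha He. rewrite Rpower_mult, Rinv_l, Rpower_1; lra. Qed.

Lemma Rpower_plus_1 x e : 0 < x -> Rpower x (e + 1) = x * Rpower x e.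
Proof. intros Hx. rewrite Rpower_plus, Rpower_1 by exact Hx. ring. Qed.

Lemma le_of_is_derive_nonneg (phi dphi : R -> R) a b : a <= b ->
  (forall t, a <= t <= b -> is_derive phi t (dphi t)) ->
  (forall t, a <= t <= b -> 0 <= dphi t) -> phi a <= phi b.
Proof.
  intros Hab Hd Hpos.
  destruct (MVT_gen phi a b dphi) as [c [Hc Heq]].
  - intros t Ht. rewrite Rmin_left, Rmax_right in Ht by lra. apply Hd; lra.
  - intros t Ht. rewrite Rmin_left, Rmax_right in Ht by lra.
    apply continuity_pt_filterlim, (@ex_derive_continuous R_AbsRing R_NormedModule).
    eexists; apply Hd; lra.
  - rewrite Rmin_left, Rmax_right in Hc by lra.
    pose proof (Hpos c Hc). nra.
Qed.

Lemma le_at_derive_sign_change (phi dphi : R -> R) x : 0 < x ->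
  (forall t, 0 < t -> is_derive phi t (dphi t)) ->
  (forall t, 0 < t <= x -> 0 <= dphi t) ->
  (forall t, x <= t -> dphi t <= 0) ->
  forall t, 0 < t -> phi t <= phi x.
Proof.
  intros Hx Hd Hinc Hdec t Ht. destruct (Rle_lt_dec t x).
  - apply (le_of_is_derive_nonneg phi dphi); [lra| |]; intros s Hs;
      [apply Hd | apply Hinc]; lra.
  - enough (- phi x <= - phi t) by lra.
    apply (le_of_is_derive_nonneg (fun s => - phi s) (fun s => - dphi s)); [lra| |].
    + intros s Hs. apply (is_derive_opp phi), Hd; lra.
    + intros s Hs. pose proof (Hdec s ltac:(lra)). lra.
Qed.

Lemma Rpower_le_contravar e a b : e <= 0 -> 0 < a <= b -> Rpower b e <= Rpower a e.
Proof.
  intros He Hab. replace e with (- - e) by ring. rewrite !(Rpower_Ropp _ (- e)).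
  apply Rinv_le_contravar; [apply Rpower_pos | apply Rle_Rpower_l; lra].
Qed.

Lemma Rpower_le_tangent l x : 0 < l <= 1 -> 0 < x -> forall t, 0 < t ->
  Rpower t l <= Rpower x l + l * Rpower x (l - 1) * (t - x).
Proof.
  intros Hl Hx t Ht. set (c := l * Rpower x (l - 1)).
  enough (Rpower t l - c * t <= Rpower x l - c * x) by lra.
  revert t Ht.
  apply (le_at_derive_sign_change (fun t => Rpower t l - c * t)
           (fun t => l * Rpower t (l - 1) - c)); [exact Hx | | |].
  - intros t Ht. apply (is_derive_minus (fun t => Rpower t l) (fun t => c * t)).
    + apply is_derive_Rpower, Ht.
    + auto_derive; auto; ring.
  - intros t Ht. pose proof (Rpower_le_contravar (l - 1) t x ltac:(lra) Ht). unfold c; nra.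
  - intros t Ht. pose proof (Rpower_le_contravar (l - 1) x t ltac:(lra) ltac:(lra)). unfold c; nra.
Qed.

Lemma Rpower_ge_tangent l x : 1 <= l -> 0 < x -> forall t, 0 < t ->
  Rpower x l + l * Rpower x (l - 1) * (t - x) <= Rpower t l.
Proof.
  intros Hl Hx t Ht. set (c := l * Rpower x (l - 1)).
  enough (c * t - Rpower t l <= c * x - Rpower x l) by lra.
  revert t Ht.
  apply (le_at_derive_sign_change (fun t => c * t - Rpower t l)
           (fun t => c - l * Rpower t (l - 1))); [exact Hx | | |].
  - intros t Ht. apply (is_derive_minus (fun t => c * t) (fun t => Rpower t l)).
    + auto_derive; auto; ring.
    + apply is_derive_Rpower, Ht.
  - intros t Ht. pose proof (Rle_Rpower_l t x (l - 1) ltac:(lra) Ht). unfold c; nra.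
  - intros t Ht. pose proof (Rle_Rpower_l x t (l - 1) ltac:(lra) ltac:(lra)). unfold c; nra.
Qed.

Definition continuous_on_pos (f : R -> R) : Prop := forall t, 0 < t -> continuous f t.

Definition is_RInt_0oo (f : R -> R) (l : R) : Prop :=
  is_RInt_gen f (at_right 0) (Rbar_locally p_infty) l.

Lemma at_right_0_lt a : 0 < a -> at_right 0 (fun t => 0 < t < a).
Proof.
  intros Ha. exists (mkposreal a Ha). intros t Ht Hpos.
  change (Rabs (t - 0) < a) in Ht. rewrite Rminus_0_r, Rabs_pos_eq in Ht; lra.
Qed.

Lemma continuous_on_pos_ex_RInt f a b :
  continuous_on_pos f -> 0 < a -> a <= b -> ex_RInt f a b.
Proof.
  intros Hf Ha Hab. apply (@ex_RInt_continuous R_CompleteNormedModule).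
  intros t Ht. rewrite Rmin_left, Rmax_right in Ht by lra. apply Hf; lra.
Qed.

Lemma is_RInt_0oo_unique f l : is_RInt_0oo f l ->
  RInt_gen f (at_right 0) (Rbar_locally p_infty) = l.
Proof. intros H. exact (is_RInt_gen_unique (V := R_CompleteNormedModule) f l H). Qed.

Lemma is_RInt_0oo_ext f g l :
  (forall t, 0 < t -> f t = g t) -> is_RInt_0oo f l -> is_RInt_0oo g l.
Proof.
  intros Hfg. apply is_RInt_gen_ext.
  apply Filter_prod with (fun a => 0 < a < 1) (fun b => 1 < b).
  - apply at_right_0_lt; lra.
  - exists 1; auto.
  - intros a b Ha Hb t Ht. simpl in Ht. rewrite Rmin_left in Ht by lra. apply Hfg; lra.
Qed.

Lemma is_RInt_0oo_plus f g lf lg :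
  is_RInt_0oo f lf -> is_RInt_0oo g lg -> is_RInt_0oo (fun t => f t + g t) (lf + lg).
Proof. intros Hf Hg. exact (is_RInt_gen_plus (V := R_NormedModule) f g lf lg Hf Hg). Qed.

Lemma is_RInt_0oo_minus f g lf lg :
  is_RInt_0oo f lf -> is_RInt_0oo g lg -> is_RInt_0oo (fun t => f t - g t) (lf - lg).
Proof. intros Hf Hg. exact (is_RInt_gen_minus (V := R_NormedModule) f g lf lg Hf Hg). Qed.

Lemma is_RInt_0oo_scal f k l :
  is_RInt_0oo f l -> is_RInt_0oo (fun t => k * f t) (k * l).
Proof. intros Hf. exact (is_RInt_gen_scal (V := R_NormedModule) f k l Hf). Qed.

Lemma is_RInt_0oo_comp_scal f k l : 0 < k ->
  is_RInt_0oo f l -> is_RInt_0oo (fun t => k * f (k * t)) l.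
Proof.
  intros Hk H P HP. destruct (H P HP) as [Qa Qb [ea Ha] [Mb Hb] HQ].
  apply Filter_prod with (fun a => Qa (k * a)) (fun b => Qb (k * b)).
  - assert (Hea : 0 < ea / k) by (apply Rdiv_lt_0_compat; [apply cond_pos | exact Hk]).
    exists (mkposreal _ Hea). intros t Ht Hpos. apply Ha; [|nra].
    change (Rabs (t - 0) < ea / k) in Ht. change (Rabs (k * t - 0) < ea).
    rewrite Rminus_0_r, Rabs_pos_eq in * by nra.
    assert (k * (ea / k) = ea) by (field; lra). nra.
  - exists (Mb / k). intros t Ht. apply Hb.
    assert (k * (Mb / k) = Mb) by (field; lra). nra.
  - intros a b Hqa Hqb. destruct (HQ _ _ Hqa Hqb) as [I [HI HPI]].
    exists I; split; [|exact HPI].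
    apply (is_RInt_ext (V := R_NormedModule) (fun t => scal k (f (k * t + 0)))).
    + intros t _. rewrite Rplus_0_r. reflexivity.
    + apply (is_RInt_comp_lin (V := R_NormedModule)). rewrite !Rplus_0_r. exact HI.
Qed.

Section Nonnegative.

Variable f : R -> R.
Hypothesis f_cont : continuous_on_pos f.
Hypothesis f_ge0 : forall t, 0 < t -> 0 <= f t.

Lemma RInt_le_RInt_wider a' a b b' :
  0 < a' -> a' <= a -> a <= b -> b <= b' -> RInt f a b <= RInt f a' b'.
Proof.
  intros H1 H2 H3 H4.
  assert (Hex : forall u v, a' <= u -> u <= v -> ex_RInt f u v)
    by (intros u v Hu Huv; apply continuous_on_pos_ex_RInt; auto; lra).
  rewrite <- (RInt_Chasles f a' a b') by (apply Hex; lra).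
  rewrite <- (RInt_Chasles f a b b') by (apply Hex; lra).
  assert (0 <= RInt f a' a)
    by (apply RInt_ge_0; [lra | apply Hex; lra | intros; apply f_ge0; lra]).
  assert (0 <= RInt f b b')
    by (apply RInt_ge_0; [lra | apply Hex; lra | intros; apply f_ge0; lra]).
  change (RInt f a b <= RInt f a' a + (RInt f a b + RInt f b b')). lra.
Qed.

Lemma RInt_le_is_RInt_0oo l a b :
  is_RInt_0oo f l -> 0 < a -> a <= b -> RInt f a b <= l.
Proof.
  intros Hl Ha Hab. apply Rnot_lt_le. intros Hlt.
  assert (Hgap : 0 < RInt f a b - l) by lra.
  destruct (Hl _ (locally_ball l (mkposreal _ Hgap))) as [Qa Qb [ea Hqa] [M Hqb] HQ].
  pose proof (cond_pos ea).
  set (a' := Rmin a (ea / 2)). set (b' := Rmax b (Rabs M + 1)).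
  assert (0 < a') by (apply Rmin_glb_lt; lra).
  assert (a' <= a) by apply Rmin_l. assert (a' <= ea / 2) by apply Rmin_r.
  assert (b <= b') by apply Rmax_l. assert (Rabs M + 1 <= b') by apply Rmax_r.
  assert (Qa a').
  { apply Hqa; [|lra]. change (Rabs (a' - 0) < ea).
    rewrite Rminus_0_r, Rabs_pos_eq; lra. }
  assert (Qb b') by (apply Hqb; pose proof (Rle_abs M); lra).
  destruct (HQ a' b') as [z [Hz Hzl]]; [assumption | assumption |].
  apply (is_RInt_unique (V := R_CompleteNormedModule)) in Hz.
  change (Rabs (z - l) < RInt f a b - l) in Hzl.
  assert (RInt f a b <= RInt f a' b') by (apply RInt_le_RInt_wider; lra).
  change (RInt f a' b' = z) in Hz. apply Rabs_def2 in Hzl. lra.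
Qed.

Lemma is_RInt_0oo_ge0 l : is_RInt_0oo f l -> 0 <= l.
Proof.
  intros Hl. pose proof (RInt_le_is_RInt_0oo l 1 1 Hl Rlt_0_1 (Rle_refl 1)) as H.
  rewrite RInt_point in H. exact H.
Qed.

Lemma is_RInt_0oo_gt0 l t0 : 0 < t0 -> 0 < f t0 -> is_RInt_0oo f l -> 0 < l.
Proof.
  intros Ht0 Hft0 Hl.
  assert (Hhalf : 0 < f t0 / 2) by lra.
  destruct (f_cont t0 Ht0 _ (locally_ball (f t0) (mkposreal _ Hhalf))) as [del Hdel].
  pose proof (cond_pos del).
  set (d := Rmin (del / 2) (t0 / 2)).
  assert (0 < d) by (apply Rmin_glb_lt; lra).
  assert (d <= del / 2) by apply Rmin_l. assert (d <= t0 / 2) by apply Rmin_r.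
  assert (Hpos : RInt (fun _ => 0) (t0 - d) t0 < RInt f (t0 - d) t0).
  { apply RInt_lt; [lra | intros; apply f_cont; lra | intros; apply continuous_const |].
    intros t Ht.
    assert (Hball : Rabs (f t - f t0) < f t0 / 2).
    { apply (Hdel t). change (Rabs (t - t0) < del). rewrite Rabs_left1; lra. }
    apply Rabs_def2 in Hball. lra. }
  rewrite RInt_const in Hpos. change (scal (t0 - (t0 - d)) 0) with ((t0 - (t0 - d)) * 0) in Hpos.
  pose proof (RInt_le_is_RInt_0oo l (t0 - d) t0 Hl ltac:(lra) ltac:(lra)). lra.
Qed.

Lemma ex_is_RInt_0oo_of_bounded B :
  (forall a b, 0 < a <= 1 -> 1 <= b -> RInt f a b <= B) -> exists l, is_RInt_0oo f l.
Proof.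
  intros HB.
  set (E := fun v => exists a b, 0 < a <= 1 /\ 1 <= b /\ v = RInt f a b).
  assert (Ebound : bound E).
  { exists B. intros v [a [b [Ha [Hb ->]]]]. apply HB; assumption. }
  assert (Ene : exists v, E v) by (exists (RInt f 1 1), 1, 1; repeat split; lra).
  destruct (completeness E Ebound Ene) as [S [Sub Slub]].
  exists S. intros P [eps HP]. pose proof (cond_pos eps).
  assert (Hnear : exists a0 b0, 0 < a0 <= 1 /\ 1 <= b0 /\ S - eps < RInt f a0 b0).
  { apply NNPP. intros Hno. enough (S <= S - eps) by lra.
    apply Slub. intros v [a [b [Ha [Hb ->]]]]. apply Rnot_lt_le. intros Hv.
    apply Hno. exists a, b; auto. }
  destruct Hnear as [a0 [b0 [Ha0 [Hb0 Hclose]]]].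
  apply Filter_prod with (fun a => 0 < a < a0) (fun b => b0 < b).
  - apply at_right_0_lt; lra.
  - exists b0; auto.
  - intros a b Ha Hb. exists (RInt f a b). split.
    + apply (RInt_correct (V := R_CompleteNormedModule)).
      apply continuous_on_pos_ex_RInt; auto; lra.
    + apply HP. change (Rabs (RInt f a b - S) < eps).
      assert (RInt f a b <= S) by (apply Sub; exists a, b; repeat split; lra).
      assert (RInt f a0 b0 <= RInt f a b) by (apply RInt_le_RInt_wider; lra).
      apply Rabs_def1; lra.
Qed.

End Nonnegative.

Lemma is_RInt_0oo_le f g lf lg :
  continuous_on_pos f -> continuous_on_pos g -> (forall t, 0 < t -> f t <= g t) ->
  is_RInt_0oo f lf -> is_RInt_0oo g lg -> lf <= lg.
Proof.
  intros Hf Hg Hfg Hlf Hlg.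
  enough (0 <= lg - lf) by lra.
  apply (is_RInt_0oo_ge0 (fun t => g t - f t)).
  - intros t Ht. apply (continuous_minus g f); auto.
  - intros t Ht. pose proof (Hfg t Ht). lra.
  - apply is_RInt_0oo_minus; assumption.
Qed.

Lemma is_RInt_0oo_lt f g lf lg t0 :
  continuous_on_pos f -> continuous_on_pos g -> (forall t, 0 < t -> f t <= g t) ->
  0 < t0 -> f t0 < g t0 -> is_RInt_0oo f lf -> is_RInt_0oo g lg -> lf < lg.
Proof.
  intros Hf Hg Hfg Ht0 Hlt Hlf Hlg.
  enough (0 < lg - lf) by lra.
  apply (is_RInt_0oo_gt0 (fun t => g t - f t)) with t0.
  - intros t Ht. apply (continuous_minus g f); auto.
  - intros t Ht. pose proof (Hfg t Ht). lra.
  - exact Ht0.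
  - lra.
  - apply is_RInt_0oo_minus; assumption.
Qed.

Lemma is_RInt_0oo_derive (F dF : R -> R) la lb :
  continuous_on_pos dF -> (forall t, 0 < t -> is_derive F t (dF t)) ->
  filterlim F (at_right 0) (locally la) ->
  filterlim F (Rbar_locally p_infty) (locally lb) ->
  is_RInt_0oo dF (lb - la).
Proof.
  intros Hcont Hder Hla Hlb P [eps HP].
  assert (Heps : 0 < eps / 2) by (pose proof (cond_pos eps); lra).
  apply Filter_prod with
    (fun a => 0 < a < 1 /\ ball la (mkposreal _ Heps) (F a))
    (fun b => 1 < b /\ ball lb (mkposreal _ Heps) (F b)).
  - apply filter_and; [apply at_right_0_lt; lra | apply (proj1 (filterlim_locally F la)), Hla].
  - apply filter_and; [exists 1; auto | apply (proj1 (filterlim_locally F lb)), Hlb].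
  - intros a b [Ha Hfa] [Hb Hfb]. exists (F b - F a). split.
    + apply (is_RInt_derive (V := R_CompleteNormedModule) F dF);
        intros t Ht; rewrite Rmin_left, Rmax_right in Ht by lra;
        [apply Hder | apply Hcont]; lra.
    + apply HP. change (Rabs (F b - F a - (lb - la)) < eps).
      change (Rabs (F a - la) < eps / 2) in Hfa. change (Rabs (F b - lb) < eps / 2) in Hfb.
      apply Rabs_def2 in Hfa. apply Rabs_def2 in Hfb. apply Rabs_def1; lra.
Qed.

Definition gamma_integrand (c s : R) : R := Rpower s (c - 1) * exp (- s).

Lemma gamma_integrand_pos c s : 0 < gamma_integrand c s.
Proof. apply Rmult_lt_0_compat; [apply Rpower_pos | apply exp_pos]. Qed.

Lemma continuous_on_pos_gamma_integrand c : continuous_on_pos (gamma_integrand c).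
Proof.
  intros s Hs. apply (@ex_derive_continuous R_AbsRing R_NormedModule).
  unfold gamma_integrand, Rpower. auto_derive. exact Hs.
Qed.

Lemma is_derive_Rpower_mul_exp_neg c s : 0 < s ->
  is_derive (fun s => Rpower s c * exp (- s)) s ((c - s) * gamma_integrand c s).
Proof.
  intros Hs.
  replace ((c - s) * gamma_integrand c s)
    with (c * Rpower s (c - 1) * exp (- s) + Rpower s c * (- exp (- s))).
  - apply (is_derive_mult (fun s => Rpower s c) (fun s => exp (- s)));
      [apply is_derive_Rpower, Hs | auto_derive; auto; ring | intros; apply Rmult_comm].
  - unfold gamma_integrand. replace c with (c - 1 + 1) at 3 by ring.
    rewrite Rpower_plus_1 by exact Hs. ring.
Qed.

Lemma Rpower_mul_exp_neg_le c s : 0 < c -> 0 < s ->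
  Rpower s c * exp (- s) <= Rpower c c * exp (- c).
Proof.
  intros Hc. revert s.
  apply (le_at_derive_sign_change _ _ c Hc (is_derive_Rpower_mul_exp_neg c));
    intros s Hs; pose proof (gamma_integrand_pos c s); nra.
Qed.

Lemma Rpower_mul_exp_neg_lim_0 c : 0 < c ->
  filterlim (fun s => Rpower s c * exp (- s)) (at_right 0) (locally 0).
Proof.
  intros Hc. apply filterlim_locally. intros eps. pose proof (cond_pos eps).
  apply (filter_imp (fun s => 0 < s < Rpower eps (/ c))); [| apply at_right_0_lt, Rpower_pos].
  intros s Hs. change (Rabs (Rpower s c * exp (- s) - 0) < eps).
  assert (Rpower s c < eps)
    by (rewrite <- (Rpower_inv_Rpower eps c) by lra; apply Rlt_Rpower_l; lra).
  assert (exp (- s) <= 1) by (rewrite <- exp_0; apply Rlt_le, exp_increasing; lra).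
  pose proof (Rpower_pos s c). pose proof (exp_pos (- s)).
  rewrite Rminus_0_r, Rabs_pos_eq by nra. nra.
Qed.

(* [s ^ c e^(-s) = s ^ (c + 1) e^(-s) / s] and the numerator is bounded. *)
Lemma Rpower_mul_exp_neg_lim_oo c : 0 < c ->
  filterlim (fun s => Rpower s c * exp (- s)) (Rbar_locally p_infty) (locally 0).
Proof.
  intros Hc. apply filterlim_locally. intros eps. pose proof (cond_pos eps).
  set (K := Rpower (c + 1) (c + 1) * exp (- (c + 1))).
  assert (HK : 0 < K) by (apply Rmult_lt_0_compat; [apply Rpower_pos | apply exp_pos]).
  exists (K / eps). intros s Hs.
  assert (0 < K / eps) by (apply Rdiv_lt_0_compat; lra).
  assert (K < eps * s) by (replace K with (eps * (K / eps)) by (field; lra); nra).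
  pose proof (Rpower_mul_exp_neg_le (c + 1) s ltac:(lra) ltac:(lra)) as Hbound. fold K in Hbound.
  rewrite Rpower_plus_1 in Hbound by lra.
  pose proof (Rpower_pos s c). pose proof (exp_pos (- s)).
  change (Rabs (Rpower s c * exp (- s) - 0) < eps).
  rewrite Rminus_0_r, Rabs_pos_eq by nra. nra.
Qed.

Lemma RInt_le_antiderivative f G dG a b : 0 < a -> a <= b ->
  continuous_on_pos f -> continuous_on_pos dG ->
  (forall t, 0 < t -> is_derive G t (dG t)) -> (forall t, a <= t <= b -> f t <= dG t) ->
  RInt f a b <= G b - G a.
Proof.
  intros Ha Hab Hf HdG HG Hle.
  assert (HI : is_RInt dG a b (minus (G b) (G a))).
  { apply (is_RInt_derive (V := R_CompleteNormedModule));
      intros t Ht; rewrite Rmin_left, Rmax_right in Ht by lra; [apply HG | apply HdG]; lra. }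
  apply (is_RInt_unique (V := R_CompleteNormedModule)) in HI.
  change (RInt dG a b = G b - G a) in HI. rewrite <- HI.
  apply RInt_le; [exact Hab | apply continuous_on_pos_ex_RInt; auto.. |].
  intros t Ht. apply Hle; lra.
Qed.

Lemma RInt_gamma_integrand_le c a b : 0 < c -> 0 < a <= 1 -> 1 <= b ->
  RInt (gamma_integrand c) a b <= / c + Rpower (c + 1) (c + 1) * exp (- (c + 1)).
Proof.
  intros Hc Ha Hb. set (K := Rpower (c + 1) (c + 1) * exp (- (c + 1))).
  assert (HK : 0 < K) by (apply Rmult_lt_0_compat; [apply Rpower_pos | apply exp_pos]).
  rewrite <- (RInt_Chasles _ a 1 b)
    by (apply continuous_on_pos_ex_RInt; [apply continuous_on_pos_gamma_integrand | lra..]).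
  change (RInt (gamma_integrand c) a 1 + RInt (gamma_integrand c) 1 b <= / c + K).
  assert (Hnear0 : RInt (gamma_integrand c) a 1 <= / c * Rpower 1 c - / c * Rpower a c).
  { apply (RInt_le_antiderivative _ (fun s => / c * Rpower s c) (fun s => Rpower s (c - 1)));
      [lra | lra | apply continuous_on_pos_gamma_integrand | |  |].
    - intros s Hs. apply (@ex_derive_continuous R_AbsRing R_NormedModule), ex_derive_Rpower, Hs.
    - intros s Hs. replace (Rpower s (c - 1)) with (/ c * (c * Rpower s (c - 1))) by (field; lra).
      apply (is_derive_scal (fun s => Rpower s c)), is_derive_Rpower, Hs.
    - intros s Hs. unfold gamma_integrand. pose proof (Rpower_pos s (c - 1)).
      assert (exp (- s) <= 1) by (rewrite <- exp_0; apply Rlt_le, exp_increasing; lra). nra. }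
  assert (Hnearoo : RInt (gamma_integrand c) 1 b <= - K / b - - K / 1).
  { apply (RInt_le_antiderivative _ (fun s => - K / s) (fun s => K / (s * s)));
      [lra | lra | apply continuous_on_pos_gamma_integrand | | |].
    - intros s Hs. apply (@ex_derive_continuous R_AbsRing R_NormedModule). auto_derive. nra.
    - intros s Hs. auto_derive; [lra | field; lra].
    - intros s Hs. apply (Rmult_le_reg_r (s * s)); [nra |].
      replace (K / (s * s) * (s * s)) with K by (field; lra).
      pose proof (Rpower_mul_exp_neg_le (c + 1) s ltac:(lra) ltac:(lra)).
      assert (Rpower s (c + 1) = s * (s * Rpower s (c - 1))).
      { replace (c + 1) with (c - 1 + 1 + 1) by ring. rewrite !Rpower_plus_1; lra. }
      unfold gamma_integrand. fold K in H. nra. }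
  replace (Rpower 1 c) with 1 in Hnear0 by (unfold Rpower; rewrite ln_1, Rmult_0_r, exp_0; ring).
  assert (0 < / c * Rpower a c)
    by (apply Rmult_lt_0_compat; [apply Rinv_0_lt_compat | apply Rpower_pos]; lra).
  assert (0 < K / b) by (apply Rdiv_lt_0_compat; lra).
  unfold Rdiv in *. rewrite Rinv_1 in Hnearoo. lra.
Qed.

Lemma is_RInt_0oo_Gamma c : 0 < c -> is_RInt_0oo (gamma_integrand c) (Gamma c).
Proof.
  intros Hc.
  destruct (ex_is_RInt_0oo_of_bounded (gamma_integrand c)
              (continuous_on_pos_gamma_integrand c)
              (fun t _ => Rlt_le _ _ (gamma_integrand_pos c t)) _
              (fun a b Ha Hb => RInt_gamma_integrand_le c a b Hc Ha Hb)) as [l Hl].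
  unfold Gamma. fold (gamma_integrand c). rewrite (is_RInt_0oo_unique _ _ Hl). exact Hl.
Qed.

Lemma Gamma_pos c : 0 < c -> 0 < Gamma c.
Proof.
  intros Hc. apply (is_RInt_0oo_gt0 (gamma_integrand c) (continuous_on_pos_gamma_integrand c)
                      (fun t _ => Rlt_le _ _ (gamma_integrand_pos c t)) _ 1);
    [lra | apply gamma_integrand_pos | apply is_RInt_0oo_Gamma, Hc].
Qed.

(* The primitive is [s ^ c e^(-s)]: the gamma law of shape [c] has mean [c]. *)
Lemma is_RInt_0oo_gamma_integrand_centered c : 0 < c ->
  is_RInt_0oo (fun s => (c - s) * gamma_integrand c s) 0.
Proof.
  intros Hc. replace 0 with (0 - 0) by ring.
  apply (is_RInt_0oo_derive (fun s => Rpower s c * exp (- s)));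
    [| intros s Hs; apply is_derive_Rpower_mul_exp_neg, Hs
     | apply Rpower_mul_exp_neg_lim_0, Hc | apply Rpower_mul_exp_neg_lim_oo, Hc].
  intros s Hs. apply (continuous_mult (fun s => c - s));
    [| apply continuous_on_pos_gamma_integrand, Hs].
  apply (continuous_minus (fun _ => c) (fun s => s));
    [apply continuous_const | apply continuous_id].
Qed.

Definition gamma_moment (l y x : R) : R := Rpower (x / y) l * Gamma (y + l) / Gamma y.

Section GammaDensity.

Variables x y : R.
Hypothesis x_pos : 0 < x.
Hypothesis y_pos : 0 < y.

Lemma gamma_density_pos t : 0 < gamma_density y x t.
Proof.
  pose proof (Rinv_0_lt_compat _ (Gamma_pos y y_pos)).
  pose proof (Rpower_pos (y / x) y). pose proof (Rpower_pos t (y - 1)).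
  pose proof (exp_pos (- (t * y / x))).
  unfold gamma_density. repeat apply Rmult_lt_0_compat; assumption.
Qed.

Lemma continuous_on_pos_gamma_density : continuous_on_pos (gamma_density y x).
Proof.
  intros t Ht. apply (@ex_derive_continuous R_AbsRing R_NormedModule).
  unfold gamma_density, Rpower. auto_derive. exact Ht.
Qed.

Lemma is_RInt_0oo_gamma_density_scale phi L :
  is_RInt_0oo (fun s => phi (x / y * s) * gamma_integrand y s) L ->
  is_RInt_0oo (fun t => phi t * gamma_density y x t) (L / Gamma y).
Proof.
  intros HL. pose proof (Gamma_pos y y_pos).
  set (k := y / x). assert (Hk : 0 < k) by (apply Rdiv_lt_0_compat; assumption).
  pose proof (is_RInt_0oo_scal _ (/ Gamma y) _ (is_RInt_0oo_comp_scal _ k L Hk HL)) as HkL.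
  replace (L / Gamma y) with (/ Gamma y * L) by (field; lra).
  refine (is_RInt_0oo_ext _ _ _ _ HkL). intros t Ht. cbv beta.
  replace (x / y * (k * t)) with t by (unfold k; field; lra).
  unfold gamma_integrand, gamma_density.
  rewrite <- (Rpower_mult_distr k t (y - 1)) by assumption.
  replace (- (k * t)) with (- (t * y / x)) by (unfold k; field; lra).
  fold k. replace (Rpower k y) with (k * Rpower k (y - 1))
    by (rewrite <- (Rpower_plus_1 k (y - 1) Hk); f_equal; ring).
  ring.
Qed.

Lemma is_RInt_0oo_gamma_density : is_RInt_0oo (gamma_density y x) 1.
Proof.
  pose proof (Gamma_pos y y_pos).
  replace 1 with (Gamma y / Gamma y) by (field; lra).
  apply (is_RInt_0oo_ext (fun t => 1 * gamma_density y x t)); [intros; ring |].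
  apply (is_RInt_0oo_gamma_density_scale (fun _ => 1)).
  apply (is_RInt_0oo_ext (gamma_integrand y)); [intros; ring |].
  apply is_RInt_0oo_Gamma, y_pos.
Qed.

Lemma is_RInt_0oo_gamma_density_centered :
  is_RInt_0oo (fun t => (t - x) * gamma_density y x t) 0.
Proof.
  pose proof (Gamma_pos y y_pos).
  replace 0 with ((- (x / y) * 0) / Gamma y) by (field; lra).
  apply (is_RInt_0oo_gamma_density_scale (fun t => t - x)).
  apply (is_RInt_0oo_ext (fun s => - (x / y) * ((y - s) * gamma_integrand y s))).
  - intros s Hs. field. lra.
  - apply is_RInt_0oo_scal, is_RInt_0oo_gamma_integrand_centered, y_pos.
Qed.

Lemma is_RInt_0oo_gamma_density_Rpower l : 0 < l ->
  is_RInt_0oo (fun t => Rpower t l * gamma_density y x t) (gamma_moment l y x).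
Proof.
  intros Hl. unfold gamma_moment. apply (is_RInt_0oo_gamma_density_scale (fun t => Rpower t l)).
  apply (is_RInt_0oo_ext (fun s => Rpower (x / y) l * gamma_integrand (y + l) s)).
  - intros s Hs. unfold gamma_integrand.
    rewrite <- Rpower_mult_distr by (try apply Rdiv_lt_0_compat; assumption).
    replace (y + l - 1) with (l + (y - 1)) by ring. rewrite Rpower_plus. ring.
  - apply is_RInt_0oo_scal, is_RInt_0oo_Gamma. lra.
Qed.

Lemma is_RInt_0oo_gamma_density_affine a b :
  is_RInt_0oo (fun t => (a + b * (t - x)) * gamma_density y x t) a.
Proof.
  pose proof (is_RInt_0oo_plus _ _ _ _
                (is_RInt_0oo_scal _ a _ is_RInt_0oo_gamma_density)
                (is_RInt_0oo_scal _ b _ is_RInt_0oo_gamma_density_centered)) as H.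
  rewrite Rmult_1_r, Rmult_0_r, Rplus_0_r in H.
  refine (is_RInt_0oo_ext _ _ _ _ H). intros t _. ring.
Qed.

Lemma continuous_on_pos_mul_gamma_density phi :
  continuous_on_pos phi -> continuous_on_pos (fun t => phi t * gamma_density y x t).
Proof.
  intros Hphi t Ht.
  apply (continuous_mult phi); [apply Hphi | apply continuous_on_pos_gamma_density]; exact Ht.
Qed.

Lemma continuous_on_pos_affine a b : continuous_on_pos (fun t => a + b * (t - x)).
Proof.
  intros t _. apply (@ex_derive_continuous R_AbsRing R_NormedModule). auto_derive. exact I.
Qed.

Lemma gamma_density_integral_le_affine phi a b L : continuous_on_pos phi ->
  (forall t, 0 < t -> phi t <= a + b * (t - x)) ->
  is_RInt_0oo (fun t => phi t * gamma_density y x t) L -> L <= a.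
Proof.
  intros Hphi Hle HL.
  apply (is_RInt_0oo_le _ (fun t => (a + b * (t - x)) * gamma_density y x t) _ _
           (continuous_on_pos_mul_gamma_density _ Hphi)
           (continuous_on_pos_mul_gamma_density _ (continuous_on_pos_affine a b)));
    [| exact HL | apply is_RInt_0oo_gamma_density_affine].
  intros t Ht. apply Rmult_le_compat_r; [apply Rlt_le, gamma_density_pos | apply Hle, Ht].
Qed.

Lemma gamma_density_integral_ge_affine phi a b L : continuous_on_pos phi ->
  (forall t, 0 < t -> a + b * (t - x) <= phi t) ->
  is_RInt_0oo (fun t => phi t * gamma_density y x t) L -> a <= L.
Proof.
  intros Hphi Hle HL.
  apply (is_RInt_0oo_le (fun t => (a + b * (t - x)) * gamma_density y x t) _ _ _
           (continuous_on_pos_mul_gamma_density _ (continuous_on_pos_affine a b))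
           (continuous_on_pos_mul_gamma_density _ Hphi));
    [| apply is_RInt_0oo_gamma_density_affine | exact HL].
  intros t Ht. apply Rmult_le_compat_r; [apply Rlt_le, gamma_density_pos | apply Hle, Ht].
Qed.

Lemma continuous_on_pos_Rpower l : continuous_on_pos (fun t => Rpower t l).
Proof.
  intros t Ht. apply (@ex_derive_continuous R_AbsRing R_NormedModule), ex_derive_Rpower, Ht.
Qed.

Lemma gamma_Rpower_moment_le l : 0 < l <= 1 ->
  gamma_moment l y x <= Rpower x l.
Proof.
  intros Hl.
  apply (gamma_density_integral_le_affine _ _ (l * Rpower x (l - 1)) _
           (continuous_on_pos_Rpower l)).
  - apply Rpower_le_tangent; assumption.
  - apply is_RInt_0oo_gamma_density_Rpower. lra.
Qed.

Lemma gamma_Rpower_moment_ge l : 1 <= l ->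
  Rpower x l <= gamma_moment l y x.
Proof.
  intros Hl.
  apply (gamma_density_integral_ge_affine _ _ (l * Rpower x (l - 1)) _
           (continuous_on_pos_Rpower l)).
  - apply Rpower_ge_tangent; assumption.
  - apply is_RInt_0oo_gamma_density_Rpower. lra.
Qed.

Lemma is_RInt_0oo_gamma_expect f M : continuous_on_pos f ->
  (forall t, 0 < t -> 0 <= f t <= M) ->
  is_RInt_0oo (fun t => f t * gamma_density y x t) (gamma_expect f y x).
Proof.
  intros Hf Hbound.
  assert (Hfrho : continuous_on_pos (fun t => f t * gamma_density y x t))
    by (apply continuous_on_pos_mul_gamma_density, Hf).
  assert (Hrho_ge0 : forall t, 0 <= gamma_density y x t)
    by (intros; apply Rlt_le, gamma_density_pos).
  destruct (ex_is_RInt_0oo_of_bounded _ Hfrho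
              (fun t Ht => Rmult_le_pos _ _ (proj1 (Hbound t Ht)) (Hrho_ge0 t)) M) as [l Hl].
  - intros a b Ha Hb.
    assert (HM : is_RInt_0oo (fun t => M * gamma_density y x t) M).
    { pose proof (is_RInt_0oo_scal _ M _ is_RInt_0oo_gamma_density) as H1.
      rewrite Rmult_1_r in H1. exact H1. }
    assert (HMrho : continuous_on_pos (fun t => M * gamma_density y x t))
      by (apply continuous_on_pos_mul_gamma_density; intros t _; apply continuous_const).
    apply Rle_trans with (RInt (fun t => M * gamma_density y x t) a b).
    + apply RInt_le; [lra | apply continuous_on_pos_ex_RInt; auto; lra.. |].
      intros t Ht. apply Rmult_le_compat_r; [apply Hrho_ge0 | apply Hbound; lra].
    + apply (RInt_le_is_RInt_0oo _ HMrho); [| exact HM | lra | lra].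
      intros t Ht. apply Rmult_le_pos; [pose proof (Hbound t Ht); lra | apply Hrho_ge0].
  - unfold gamma_expect. rewrite (is_RInt_0oo_unique _ _ Hl). exact Hl.
Qed.

End GammaDensity.

(* [power_slope l f x] is the derivative of [f] with respect to [t ^ l] at [t = x]. *)
Definition power_slope (l : R) (f : R -> R) (x : R) : R :=
  Derive f x * Rpower x (1 - l) / l.

Section GenBernstein.

Variables (l : R) (f : R -> R).
Hypothesis l_pos : 0 < l.
Hypothesis f_Bernstein : gen_Bernstein l f.

Lemma gen_Bernstein_ex_derive t : 0 < t -> ex_derive f t.
Proof. intros Ht. destruct f_Bernstein as [_ [Hder _]]. exact (Hder 1%nat t Ht). Qed.

Lemma gen_Bernstein_continuous : continuous_on_pos f.
Proof.
  intros t Ht. apply (@ex_derive_continuous R_AbsRing R_NormedModule), gen_Bernstein_ex_derive, Ht.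
Qed.

Lemma power_slope_ge0 x : 0 < x -> 0 <= power_slope l f x.
Proof.
  intros Hx. destruct f_Bernstein as [_ [_ Hcm]]. destruct (Hcm 0%nat x Hx) as [_ H0].
  simpl in H0. apply Rdiv_le_0_compat; lra.
Qed.

Lemma power_slope_nonincreasing s t : 0 < s -> s <= t -> power_slope l f t <= power_slope l f s.
Proof.
  intros Hs Hst. destruct f_Bernstein as [_ [_ Hcm]]. unfold power_slope, Rdiv.
  apply Rmult_le_compat_r; [apply Rlt_le, Rinv_0_lt_compat, l_pos |].
  set (h := fun u => Derive f u * Rpower u (1 - l)).
  enough (- h s <= - h t) by (unfold h in *; lra).
  apply (le_of_is_derive_nonneg (fun u => - h u) (fun u => - Derive h u)); [exact Hst | |].
  - intros u Hu. destruct (Hcm 1%nat u ltac:(lra)) as [Hex _].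
    apply (is_derive_opp h), Derive_correct, Hex.
  - intros u Hu. destruct (Hcm 1%nat u ltac:(lra)) as [_ H1]. simpl in H1. unfold h. lra.
Qed.

Lemma Derive_power_slope t : 0 < t -> Derive f t = power_slope l f t * (l * Rpower t (l - 1)).
Proof.
  intros Ht. unfold power_slope.
  replace (Derive f t * Rpower t (1 - l) / l * (l * Rpower t (l - 1)))
    with (Derive f t * (Rpower t (1 - l) * Rpower t (l - 1))) by (field; lra).
  rewrite <- Rpower_plus. replace (1 - l + (l - 1)) with 0 by ring.
  rewrite Rpower_O by exact Ht. ring.
Qed.

Lemma gen_Bernstein_le_Rpower_tangent x : 0 < x -> forall t, 0 < t ->
  f t <= f x + power_slope l f x * (Rpower t l - Rpower x l).
Proof.
  intros Hx t Ht. set (beta := power_slope l f x).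
  enough (f t - beta * Rpower t l <= f x - beta * Rpower x l) by lra.
  revert t Ht.
  apply (le_at_derive_sign_change (fun t => f t - beta * Rpower t l)
           (fun t => (power_slope l f t - beta) * (l * Rpower t (l - 1)))); [exact Hx | | |].
  - intros t Ht. replace ((power_slope l f t - beta) * (l * Rpower t (l - 1)))
      with (Derive f t - beta * (l * Rpower t (l - 1)))
      by (rewrite Derive_power_slope by exact Ht; ring).
    apply (is_derive_minus f (fun t => beta * Rpower t l));
      [apply Derive_correct, gen_Bernstein_ex_derive, Ht |
       apply (is_derive_scal (fun t => Rpower t l)), is_derive_Rpower, Ht].
  - intros t Ht. pose proof (power_slope_nonincreasing t x (proj1 Ht) (proj2 Ht)) as Hle.
    fold beta in Hle.
    pose proof (Rpower_pos t (l - 1)). apply Rmult_le_pos; [lra | nra].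
  - intros t Ht. pose proof (power_slope_nonincreasing x t Hx Ht) as Hle. fold beta in Hle.
    pose proof (Rpower_pos t (l - 1)). assert (0 <= l * Rpower t (l - 1)) by nra. nra.
Qed.

(* Let [t -> 0] in the tangent bound and use [f t >= 0]. *)
Lemma power_slope_mul_Rpower_le x : 0 < x -> power_slope l f x * Rpower x l <= f x.
Proof.
  intros Hx. set (beta := power_slope l f x). destruct f_Bernstein as [Hf_ge0 _].
  assert (Hgap : forall t, 0 < t -> beta * Rpower x l - f x <= beta * Rpower t l).
  { intros t Ht. pose proof (gen_Bernstein_le_Rpower_tangent x Hx t Ht) as Htan.
    pose proof (Hf_ge0 t Ht). fold beta in Htan. lra. }
  apply Rnot_lt_le. intros Hlt. set (D := beta * Rpower x l - f x).
  destruct (power_slope_ge0 x Hx) as [Hbeta | Hbeta]; fold beta in Hbeta.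
  - assert (HD : 0 < D / (2 * beta)) by (apply Rdiv_lt_0_compat; unfold D; lra).
    pose proof (Hgap _ (Rpower_pos (D / (2 * beta)) (/ l))) as Hsmall.
    rewrite Rpower_inv_Rpower in Hsmall by assumption.
    replace (beta * (D / (2 * beta))) with (D / 2) in Hsmall by (field; lra).
    unfold D in Hsmall. lra.
  - rewrite <- Hbeta in Hlt. pose proof (Hf_ge0 x Hx). lra.
Qed.

Lemma gen_Bernstein_lt_Rpower_tangent x M : 0 < x ->
  (forall t, 0 < t -> Rabs (f t) <= M) -> (exists a b, 0 < a /\ 0 < b /\ f a <> f b) ->
  exists t0, 0 < t0 /\ f t0 < f x + power_slope l f x * (Rpower t0 l - Rpower x l).
Proof.
  intros Hx HM [a [b [Ha [Hb Hab]]]]. set (beta := power_slope l f x).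
  apply NNPP. intros Hno.
  assert (Heq : forall t, 0 < t -> f t = f x + beta * (Rpower t l - Rpower x l)).
  { intros t Ht. pose proof (gen_Bernstein_le_Rpower_tangent x Hx t Ht).
    apply Rle_antisym; [assumption |]. apply Rnot_lt_le. intros Hlt. apply Hno. exists t; auto. }
  destruct (power_slope_ge0 x Hx) as [Hbeta | Hbeta]; fold beta in Hbeta.
  - set (T := (Rabs (M - f x + beta * Rpower x l) + 1) / beta).
    assert (HT : 0 < T)
      by (apply Rdiv_lt_0_compat; [pose proof (Rabs_pos (M - f x + beta * Rpower x l)) |]; lra).
    set (t := Rpower T (/ l)). assert (Ht : 0 < t) by apply Rpower_pos.
    assert (HtT : Rpower t l = T) by (apply Rpower_inv_Rpower; assumption).
    assert (beta * T = Rabs (M - f x + beta * Rpower x l) + 1) by (unfold T; field; lra).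
    pose proof (Rle_abs (M - f x + beta * Rpower x l)). pose proof (Rle_abs (f t)).
    pose proof (HM t Ht). rewrite (Heq t Ht), HtT in *. lra.
  - apply Hab. rewrite (Heq a Ha), (Heq b Hb), <- Hbeta. ring.
Qed.

End GenBernstein.

Lemma gamma_expect_lt_Rpower_tangent l f x y M : 0 < l -> gen_Bernstein l f ->
  (forall t, 0 < t -> Rabs (f t) <= M) -> (exists a b, 0 < a /\ 0 < b /\ f a <> f b) ->
  0 < x -> 0 < y ->
  gamma_expect f y x < f x + power_slope l f x * (gamma_moment l y x - Rpower x l).
Proof.
  intros Hl Hf HM Hnc Hx Hy. set (beta := power_slope l f x).
  set (tangent := fun t => f x + beta * (Rpower t l - Rpower x l)).
  assert (Htangent : continuous_on_pos tangent).
  { intros t Ht. apply (@ex_derive_continuous R_AbsRing R_NormedModule).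
    unfold tangent, Rpower. auto_derive. exact Ht. }
  assert (Hexpect : is_RInt_0oo (fun t => f t * gamma_density y x t) (gamma_expect f y x)).
  { apply (is_RInt_0oo_gamma_expect x y Hx Hy f M (gen_Bernstein_continuous l f Hf)).
    intros t Ht. destruct Hf as [Hf_ge0 _]. pose proof (Hf_ge0 t Ht). pose proof (HM t Ht).
    pose proof (Rle_abs (f t)). lra. }
  assert (Hcompare : is_RInt_0oo (fun t => tangent t * gamma_density y x t)
                       (f x + beta * (gamma_moment l y x - Rpower x l))).
  { pose proof (is_RInt_0oo_gamma_density x y Hx Hy) as Hmass.
    pose proof (is_RInt_0oo_plus _ _ _ _ (is_RInt_0oo_scal _ (f x) _ Hmass)
                  (is_RInt_0oo_scal _ beta _
                     (is_RInt_0oo_minus _ _ _ _ (is_RInt_0oo_gamma_density_Rpower x y Hx Hy l Hl)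
                        (is_RInt_0oo_scal _ (Rpower x l) _ Hmass)))) as H.
    rewrite !Rmult_1_r in H. refine (is_RInt_0oo_ext _ _ _ _ H). intros t _. unfold tangent. ring. }
  destruct (gen_Bernstein_lt_Rpower_tangent l f Hl Hf x M Hx HM Hnc) as [t0 [Ht0 Hlt]].
  apply (is_RInt_0oo_lt _ _ _ _ t0
           (continuous_on_pos_mul_gamma_density x y f (gen_Bernstein_continuous l f Hf))
           (continuous_on_pos_mul_gamma_density x y _ Htangent));
    [| exact Ht0 | | exact Hexpect | exact Hcompare].
  - intros t Ht. apply Rmult_le_compat_r; [apply Rlt_le, gamma_density_pos; assumption |].
    apply gen_Bernstein_le_Rpower_tangent; assumption.
  - apply Rmult_lt_compat_r; [apply gamma_density_pos; assumption | exact Hlt].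
Qed.

Lemma g_lambda_mul_gamma_moment l y x : 0 < l -> 0 < x -> 0 < y ->
  g_lambda l y * gamma_moment l y x = Rpower x l.
Proof.
  intros Hl Hx Hy. pose proof (Gamma_pos y Hy). pose proof (Gamma_pos (l + y) ltac:(lra)).
  unfold g_lambda, gamma_moment. rewrite (Rplus_comm y l).
  replace (Rpower y l * Gamma y / Gamma (l + y) * (Rpower (x / y) l * Gamma (l + y) / Gamma y))
    with (Rpower y l * Rpower (x / y) l) by (field; lra).
  rewrite Rpower_mult_distr by (try apply Rdiv_lt_0_compat; assumption).
  f_equal. field. lra.
Qed.

Lemma g_lambda_pos l y : 0 < l -> 0 < y -> 0 < g_lambda l y.
Proof.
  intros Hl Hy. unfold g_lambda.
  apply Rdiv_lt_0_compat; [apply Rmult_lt_0_compat; [apply Rpower_pos |] |]; apply Gamma_pos; lra.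
Qed.

Theorem theorem1p2 (lambda : R) (f : R -> R) :
  0 < lambda ->
  gen_Bernstein lambda f ->
  (exists M : R, forall t, 0 < t -> Rabs (f t) <= M) ->
  (exists a b : R, 0 < a /\ 0 < b /\ f a <> f b) ->
  (lambda <= 1 ->
     forall x y : R, 0 < x -> 0 < y -> gamma_expect f y x < f x) /\
  (1 < lambda ->
     forall x y : R, 0 < x -> 0 < y ->
       g_lambda lambda y * gamma_expect f y x < f x).
Proof.
  intros Hl Hf [M HM] Hnc.
  split; intros Hcase x y Hx Hy;
    pose proof (gamma_expect_lt_Rpower_tangent lambda f x y M Hl Hf HM Hnc Hx Hy) as Hlt;
    pose proof (power_slope_ge0 lambda f Hl Hf x Hx) as Hbeta;
    set (beta := power_slope lambda f x) in *;
    set (moment := gamma_moment lambda y x) in *.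
  - assert (moment <= Rpower x lambda) by (apply gamma_Rpower_moment_le; lra).
    nra.
  - pose proof (g_lambda_mul_gamma_moment lambda y x Hl Hx Hy) as Hg. fold moment in Hg.
    assert (Rpower x lambda <= moment) by (apply gamma_Rpower_moment_ge; lra).
    pose proof (power_slope_mul_Rpower_le lambda f Hl Hf x Hx) as Hfx. fold beta in Hfx.
    pose proof (Rpower_pos x lambda).
    pose proof (g_lambda_pos lambda y Hl Hy) as Hg_pos.
    set (g := g_lambda lambda y) in *.
    assert (g <= 1) by nra.
    apply Rmult_lt_compat_l with (r := g) in Hlt; [| exact Hg_pos].
    (* [g (f x + beta (moment - x^l)) = g f x + (1 - g) beta x^l] *)
    nra.
Qed.
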